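(* Let $q$ be a prime power and let $\mathcal{C}_{\mathsf{out}}$ be an $[n_{\mathsf{out}},k_{\mathsf{out}}]$ linear code over $\mathbb{F}_q$ with generator matrix $\mathbf{G}_{\mathsf{out}}\in\mathbb{F}_q^{k_{\mathsf{out}}\times n_{\mathsf{out}}}$, and let $\mathbb{I}_{\mathsf{out}}$ be the set of its information sets. Let $k_{\mathsf{in}}\leq k_{\mathsf{out}}\leq s$, let $\mathbf{g}\in\mathbb{F}_{q^s}^{k_{\mathsf{out}}}$ have entries linearly independent over $\mathbb{F}_q$, and let $\mathbf{G}_{\mathsf{in}}$ be the generator matrix of the Gabidulin code $\mathcal{C}_{\mathsf{in}}=\mathsf{Gab}(k_{\mathsf{out}},k_{\mathsf{in}},\mathbf{g})$ over $\mathbb{F}_{q^s}$. Then for every $\mathcal{I}\in\mathbb{I}_{\mathsf{out}}$, the code obtained from the row span of $\mathbf{G}_{\mathsf{in}}\cdot\mathbf{G}_{\mathsf{out}}$ by restricting every codeword to the positions in $\mathcal{I}$ is a Gabidulin code $\mathsf{Gab}(k_{\mathsf{out}},k_{\mathsf{in}},\mathbf{g}')$ over $\mathbb{F}_{q^s}$ for some $\mathbf{g}'\in\mathbb{F}_{q^s}^{k_{\mathsf{out}}}$ with entries linearly independent over $\mathbb{F}_q$.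
   Context: An information set of an $[N,k]$ linear code $\mathcal{C}$ is a set $\mathcal{I}\subseteq[N]$ with $|\mathcal{I}|=k$ such that the restriction of $\mathcal{C}$ to the coordinates in $\mathcal{I}$ has dimension $k$. Gabidulin code: for $\mathbf{g}=(g_1,\dots,g_N)\in\mathbb{F}_{q^s}^N$ with $g_i$ linearly independent over $\mathbb{F}_q$, $\mathsf{Gab}(N,k,\mathbf{g})$ is the $[N,k]$ code over $\mathbb{F}_{q^s}$ spanned by the rows of the $k\times N$ matrix whose $(i,j)$ entry is $g_j^{q^{i-1}}$ (this matrix is called its generator matrix). *)

From HB Require Import structures.
From mathcomp Require Import all_boot all_order all_algebra all_field.
Set Implicit Arguments. Unset Strict Implicit. Unset Printing Implicit Defensive.
Import GRing.Theory.
Local Open Scope ring_scope.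

(* Column-selection matrix: the n x k 0/1 matrix picking the coordinates in I,
   in increasing order (enum I is increasing for ordinals). *)
Definition sel_mx (R : pzSemiRingType) (n k : nat) (I : {set 'I_n}) : 'M[R]_(n, k) :=
  \matrix_(i < n, j < k) ((i \in I) && (index i (enum I) == j :> nat))%:R.

Definition restrict_cols (R : pzSemiRingType) (m n k : nat) (I : {set 'I_n})
  (M : 'M[R]_(m, n)) : 'M[R]_(m, k) := M *m sel_mx R k I.

Definition is_info_set (F : fieldType) (k n : nat) (G : 'M[F]_(k, n)) (I : {set 'I_n}) :=
  (#|I| == k) && (\rank (restrict_cols k I G) == k)%N.

Definition F_lin_indep (F : fieldType) (L : fieldExtType F) (N : nat) (g : 'rV[L]_N) :=
  free [seq g 0 j | j <- enum 'I_N].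

(* Generator matrix of Gab(N,k,g): (i,j) entry g_j^(q^i) (0-indexed i). *)
Definition gab_mx (L : fieldType) (q k N : nat) (g : 'rV[L]_N) : 'M[L]_(k, N) :=
  \matrix_(i < k, j < N) (g 0 j) ^+ (q ^ i).

From HB Require Import structures.
From mathcomp Require Import all_boot all_order all_algebra all_field.
From mathcomp Require Import abelian pgroup.

Set Implicit Arguments.
Unset Strict Implicit.
Unset Printing Implicit Defensive.
Local Open Scope ring_scope.
Import GRing.Theory.

(* Restricting to an information set I is right multiplication by the invertible
   matrix A of the columns of G_out in I, which commutes with the Frobenius
   powers x |-> x ^+ q ^ i since these are F-linear on L.  Hence the restricted
   code is generated by gab_mx (g *m A), and g *m A has F-independent entries
   because A is invertible. *)

Lemma pnat_card_finField (F : finFieldType) : [pchar F].-nat #|F|.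
Proof.
have [p _ pF] := finPcharP F.
have := abelem_pgroup (fin_ring_pchar_abelem pF).
rewrite /pgroup cardsT; apply: sub_in_pnat => r _.
by rewrite inE => /eqP ->.
Qed.

Section FrobeniusPowers.

Variables (F : finFieldType) (L : fieldExtType F) (i : nat).

Lemma exprD_card_expn : {morph (fun x : L => x ^+ (#|F| ^ i)) : x y / x + y}.
Proof.
move=> x y; apply: exprDn_pchar.
by rewrite pnatX (eq_pnat _ (pchar_lalg L)) pnat_card_finField.
Qed.

Lemma expr0_card_expn : (0 : L) ^+ (#|F| ^ i) = 0.
Proof. by rewrite expr0n expn_eq0 eqn0Ngt (ltnW (finNzRing_gt1 F)). Qed.

Lemma in_alg_expr_card_expn (a : F) : (a%:A : L) ^+ (#|F| ^ i) = a%:A.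
Proof.
rewrite -[_ ^+ _](rmorphXn (GRing.in_alg L)); congr (_%:A).
elim: i => [|j IHj]; first by rewrite expr1.
by rewrite expnSr exprM IHj expf_card.
Qed.

End FrobeniusPowers.

Lemma gab_mx_mulmx (F : finFieldType) (L : fieldExtType F) k m n
    (g : 'rV[L]_m) (B : 'M[F]_(m, n)) :
  gab_mx #|F| k g *m map_mx (GRing.in_alg L) B
    = gab_mx #|F| k (g *m map_mx (GRing.in_alg L) B).
Proof.
apply/matrixP => i j; rewrite !mxE.
rewrite (big_morph _ (@exprD_card_expn _ L i) (@expr0_card_expn _ L i)).
by apply: eq_bigr => l _; rewrite !mxE exprMn in_alg_expr_card_expn.
Qed.

Section Restriction.

Variables (R S : pzSemiRingType) (f : {rmorphism R -> S}) (n k : nat).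
Variable I : {set 'I_n}.

Lemma map_sel_mx : map_mx f (sel_mx R k I) = sel_mx S k I.
Proof. by apply/matrixP => i j; rewrite !mxE rmorph_nat. Qed.

Lemma restrict_cols_mulmx_map m p (M : 'M[S]_(m, p)) (G : 'M[R]_(p, n)) :
  restrict_cols k I (M *m map_mx f G) = M *m map_mx f (restrict_cols k I G).
Proof. by rewrite /restrict_cols map_mxM map_sel_mx mulmxA. Qed.

End Restriction.

Lemma info_set_unitmx (F : fieldType) k n (G : 'M[F]_(k, n)) (I : {set 'I_n}) :
  is_info_set G I -> restrict_cols k I G \in unitmx.
Proof. by case/andP => _ rkG; rewrite -row_free_unit. Qed.

Section IndependentEntries.

Variables (F : fieldType) (L : fieldExtType F).

Lemma span_mulmx_map_subv m n (g : 'rV[L]_m) (B : 'M[F]_(m, n)) :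
  (<<[seq (g *m map_mx (GRing.in_alg L) B) 0%R j | j <- enum 'I_n]>>
     <= <<[seq g 0%R j | j <- enum 'I_m]>>)%VS.
Proof.
apply/span_subvP => _ /mapP [j _ ->]; rewrite mxE; apply: rpred_sum => l _.
rewrite mxE /= mulr_algr; apply/rpredZ/memv_span.
by apply: map_f; rewrite mem_enum.
Qed.

Lemma F_lin_indep_mulmx_unit m (g : 'rV[L]_m) (A : 'M[F]_m) :
  A \in unitmx -> F_lin_indep g -> F_lin_indep (g *m map_mx (GRing.in_alg L) A).
Proof.
move=> Aunit; rewrite /F_lin_indep /free !size_map => /eqP <-; apply/eqP.
congr (\dim _); apply/subv_anti; rewrite span_mulmx_map_subv /=.
have {1}-> : g = g *m map_mx (GRing.in_alg L) A *m map_mx (GRing.in_alg L) (invmx A).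
  by rewrite -mulmxA -map_mxM mulmxV // map_mx1 mulmx1.
exact: span_mulmx_map_subv.
Qed.

End IndependentEntries.

Theorem lemma2 (F : finFieldType) (L : fieldExtType F) (s k_in k_out n_out : nat)
  (G_out : 'M[F]_(k_out, n_out)) (g : 'rV[L]_k_out) (I : {set 'I_n_out}) :
  \dim (fullv : {vspace L}) = s ->
  (k_in <= k_out)%N -> (k_out <= s)%N ->
  row_free G_out ->
  F_lin_indep g ->
  is_info_set G_out I ->
  exists g' : 'rV[L]_k_out,
    F_lin_indep g' /\
    (restrict_cols k_out I (gab_mx #|F| k_in g *m map_mx (GRing.in_alg L) G_out)
       == gab_mx #|F| k_in g')%MS.
Proof.
move=> _ _ _ _ indep_g infoI.
exists (g *m map_mx (GRing.in_alg L) (restrict_cols k_out I G_out)); split.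
  exact: F_lin_indep_mulmx_unit (info_set_unitmx infoI) indep_g.
by rewrite restrict_cols_mulmx_map gab_mx_mulmx; apply/eqmxP.
Qed.
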